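(* Let $n\ge2$ and $\sigma,\delta,\tau\in\mathbb{C}$ with $\sigma\tau\ne0$, and let $\lambda_h=\delta+2\sqrt{\sigma\tau}\cos\frac{h\pi}{n+1}$ ($1\le h\le n$) be an eigenvalue of $T=(n;\sigma,\delta,\tau)$. Then its $\mathcal{T}$-structured condition number is \[ \kappa_{\mathcal T}(\lambda_h)=\sqrt{\frac1n+\frac1{n-1}\left(\left|\frac{\sigma}{\tau}\right|+\left|\frac{\tau}{\sigma}\right|\right)\cos^2\frac{h\pi}{n+1}}. \] In particular $\kappa_{\mathcal T}(\lambda_h)$ depends only on $h$, $n$ and $|\sigma/\tau|$.
   Context: $T=(n;\sigma,\delta,\tau)$ is the $n\times n$ tridiagonal Toeplitz matrix with diagonal $\delta$, superdiagonal $\tau$, subdiagonal $\sigma$. Its eigenvalue $\lambda_h$ has right eigenvector $x_h$ with components $x_{h,k}=(\sqrt{\sigma/\tau})^k\sin\frac{hk\pi}{n+1}$ and left eigenvector $y_h$ ($y_h^HT=\lambda_hy_h^H$) with $y_{h,k}=(\sqrt{\bar\tau/\bar\sigma})^k\sin\frac{hk\pi}{n+1}$, $k=1,\dots,n$. Let $\widetilde x_h=x_h/\|x_h\|_2$, $\widetilde y_h=y_h/\|y_h\|_2$, $\kappa(\lambda_h)=\|x_h\|_2\|y_h\|_2/|y_h^Hx_h|$, and $W_h=\widetilde y_h\widetilde x_h^H$ (the Wilkinson perturbation). Let $\mathcal T\subset\mathbb{C}^{n\times n}$ be the subspace of $n\times n$ tridiagonal Toeplitz matrices and $W_h|_{\mathcal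 T}$ the orthogonal projection of $W_h$ onto $\mathcal T$ with respect to the Frobenius inner product. The $\mathcal T$-structured condition number is $\kappa_{\mathcal T}(\lambda_h)=\kappa(\lambda_h)\,\|W_h|_{\mathcal T}\|_F$. *)

From mathcomp Require Import all_boot all_order all_algebra.
From mathcomp Require Import complex.
From mathcomp Require Import reals trigo.

Set Implicit Arguments.
Unset Strict Implicit.
Unset Printing Implicit Defensive.

Import Order.TTheory GRing.Theory Num.Theory.
Local Open Scope ring_scope.
Local Open Scope complex_scope.

Section TT.
Variable R : realType.
Local Notation C := R[i].

Definition tridiag_toeplitz (n : nat) (sigma delta tau : C) : 'M[C]_n :=
  \matrix_(i < n, j < n)
    if i == j :> nat then delta
    else if j == i.+1 :> nat then tau
    else if i == j.+1 :> nat then sigma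
    else 0.

Definition is_tridiag_toeplitz (n : nat) (A : 'M[C]_n) : Prop :=
  exists sigma delta tau : C, A = tridiag_toeplitz n sigma delta tau.

Definition frob_inner (n : nat) (A B : 'M[C]_n) : C :=
  \sum_(i < n) \sum_(j < n) (A i j)^* * B i j.

Definition frob_norm (n : nat) (A : 'M[C]_n) : R :=
  Num.sqrt (\sum_(i < n) \sum_(j < n) (Normc.normc (A i j)) ^+ 2).

Definition vnorm2 (n : nat) (v : 'cV[C]_n) : R :=
  Num.sqrt (\sum_(k < n) (Normc.normc (v k 0)) ^+ 2).

Definition ctrmx (m n : nat) (A : 'M[C]_(m, n)) : 'M[C]_(n, m) :=
  map_mx (@conjc R) A^T.

Definition cdot (n : nat) (y x : 'cV[C]_n) : C :=
  \sum_(k < n) (y k 0)^* * x k 0.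

(* Right eigenvector x_h: x_{h,k} = (sqrt(sigma/tau))^k sin(h k pi/(n+1)),
   k = 1..n (row index i : 'I_n corresponds to k = i+1).
   sqrtc is the principal complex square root. *)
Definition right_evec (n h : nat) (sigma tau : C) : 'cV[C]_n :=
  \col_(i < n) (sqrtc (sigma / tau) ^+ i.+1 *
                (sin ((h * i.+1)%:R * pi / (n.+1)%:R))%:C).

Definition left_evec (n h : nat) (sigma tau : C) : 'cV[C]_n :=
  \col_(i < n) (sqrtc (tau^* / sigma^*) ^+ i.+1 *
                (sin ((h * i.+1)%:R * pi / (n.+1)%:R))%:C).

Definition kappa (n h : nat) (sigma tau : C) : R :=
  let x := right_evec n h sigma tau in
  let y := left_evec n h sigma tau in
  vnorm2 x * vnorm2 y / Normc.normc (cdot y x).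

Definition wilkinson (n h : nat) (sigma tau : C) : 'M[C]_n :=
  let x := right_evec n h sigma tau in
  let y := left_evec n h sigma tau in
  ((vnorm2 y)^-1)%:C *: y *m ctrmx (((vnorm2 x)^-1)%:C *: x).

Definition is_orth_proj_T (n : nat) (W P : 'M[C]_n) : Prop :=
  is_tridiag_toeplitz P /\
  forall Q : 'M[C]_n, is_tridiag_toeplitz Q -> frob_inner Q (W - P) = 0.

End TT.

From mathcomp Require Import all_boot all_order all_algebra.
From mathcomp Require Import complex.
From mathcomp Require Import reals trigo.
From mathcomp Require Import ring zify.

Set Implicit Arguments.
Unset Strict Implicit.
Unset Printing Implicit Defensive.

Import Order.TTheory GRing.Theory Num.Theory.
Local Open Scope ring_scope.
Local Open Scope complex_scope.

(* Write z = sigma / tau, s = sqrt z and f_k = sin (h k pi / (n+1)).  The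
   principal square root commutes with positive scalings, so sqrt (conj z^-1)
   = s / |z| =: t and t * conj s = 1: the eigenvectors are x_k = s^k f_k and
   y_k = t^k f_k, y^H x = S := sum_k f_k^2, and W_h has entries
   t^i conj(s)^j f_i f_j / (|x| |y|).  Projecting onto the tridiagonal Toeplitz
   matrices replaces each of the three diagonals by its mean, so only the
   diagonal sums S, conj(s) Q and t Q matter, where Q = sum_k f_k f_(k+1).
   The recurrence f_(k+1) + f_(k-1) = 2 cos (h pi / (n+1)) f_k together with
   f_0 = f_(n+1) = 0 gives Q = cos (h pi / (n+1)) S, while |s|^2 = |z| and
   |t|^2 = 1 / |z|; finally kappa = |x| |y| / S. *)

Section ComplexFacts.
Variable R : rcfType.
Implicit Types (z : R[i]) (r : R).
Local Notation normc := (@Normc.normc R).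

Lemma normcC z : (normc z)%:C = `|z|.
Proof. by []. Qed.

Lemma normc_real r : normc r%:C = `|r|.
Proof. by rewrite /= expr0n addr0 sqrtr_sqr. Qed.

Lemma normc_ge0 z : 0 <= normc z.
Proof. by rewrite -lecR normcC normr_ge0. Qed.

Lemma normc_gt0 z : (0 < normc z) = (z != 0).
Proof. by rewrite -ltcR normcC normr_gt0. Qed.

Lemma normc_conj z : normc z^* = normc z.
Proof. by apply: complexI; rewrite !normcC normcJ. Qed.

Lemma normc_sqrtc z : normc (sqrtc z) ^+ 2 = normc z.
Proof. by rewrite expr2 -Normc.normcM -expr2 sqr_sqrtc. Qed.

Lemma sqrtcZ r z : 0 < r -> sqrtc (r%:C * z) = (Num.sqrt r)%:C * sqrtc z.
Proof.
move=> r_gt0; case: z => a b.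
have -> : r%:C * (a +i* b) = (r * a) +i* (r * b) by simpc.
rewrite /sqrtc mulf_eq0 (gt_eqF r_gt0) /= sgrM (gtr0_sg r_gt0) mul1r.
have -> : (r * a) ^+ 2 + (r * b) ^+ 2 = r ^+ 2 * (a ^+ 2 + b ^+ 2) by ring.
rewrite sqrtrM ?sqr_ge0 // sqrtr_sqr (gtr0_norm r_gt0).
set m := Num.sqrt (a ^+ 2 + b ^+ 2).
have -> : (r * m + r * a) / 2%:R = r * ((m + a) / 2%:R) by ring.
have -> : (r * m - r * a) / 2%:R = r * ((m - a) / 2%:R) by ring.
by rewrite !(sqrtrM _ (ltW r_gt0)); simpc; rewrite mulrCA.
Qed.

Lemma sqrtc_conjV z : z != 0 -> sqrtc (z^-1)^* = ((normc z)^-1)%:C * sqrtc z.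
Proof.
move=> z0; have nz_gt0 : 0 < normc z by rewrite normc_gt0.
have -> : (z^-1)^* = ((normc z ^+ 2)^-1)%:C * z.
  rewrite invc_norm rmorphM -normcC -rmorphXn -fmorphV; congr (_ * _); last exact: conjcK.
  exact: conjc_real.
rewrite sqrtcZ ?invr_gt0 ?exprn_gt0 // -exprVn sqrtr_sqr.
by rewrite ger0_norm // invr_ge0 ltW.
Qed.

Lemma mul_sqrtc_conjV_conj z : z != 0 -> sqrtc (z^-1)^* * (sqrtc z)^* = 1.
Proof.
move=> z0; rewrite sqrtc_conjV // -mulrA -sqr_normc -normcC -rmorphXn normc_sqrtc.
by rewrite -rmorphM mulVf // gt_eqF // normc_gt0.
Qed.

End ComplexFacts.

Definition on_diag : rel nat := fun i j => i == j.
Definition on_superdiag : rel nat := fun i j => j == i.+1.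
Definition on_subdiag : rel nat := fun i j => i == j.+1.

Section BandSums.
Variables (V : zmodType) (n : nat).
Implicit Types (p : rel nat) (F G : 'I_n -> 'I_n -> V).

Definition band_sum p F : V :=
  \sum_(i < n) \sum_(j < n) if p i j then F i j else 0.

Lemma eq_band_sum p F G : F =2 G -> band_sum p F = band_sum p G.
Proof. by move=> eFG; apply: eq_bigr => i _; apply: eq_bigr => j _; rewrite eFG. Qed.

Lemma band_sumB p F G :
  band_sum p (fun i j => F i j - G i j) = band_sum p F - band_sum p G.
Proof.
rewrite -sumrB; apply: eq_bigr => i _; rewrite -sumrB; apply: eq_bigr => j _.
by case: ifP; rewrite ?subr0.
Qed.

Lemma band_sum_mxB p (A B : 'M[V]_n) :
  band_sum p (A - B) = band_sum p A - band_sum p B.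
Proof. by rewrite -band_sumB; apply: eq_band_sum => i j; rewrite !mxE. Qed.

Lemma band_sum_diag F : band_sum on_diag F = \sum_(i < n) F i i.
Proof.
apply: eq_bigr => i _; rewrite (bigD1 i) //= /on_diag eqxx big1 ?addr0 // => j ji.
by rewrite ifN // eq_sym.
Qed.

Lemma band_sum_superdiag (F : nat -> nat -> V) :
  band_sum on_superdiag (fun i j => F i j) = \sum_(i < n.-1) F i i.+1.
Proof.
rewrite /band_sum (eq_bigr (fun i : 'I_n => if (i.+1 < n)%N then F i i.+1 else 0)).
  case: n => [|m]; first by rewrite !big_ord0.
  rewrite big_ord_recr /= ltnn addr0; apply: eq_bigr => i _.
  by rewrite ltnS ltn_ord.
move=> i _; rewrite -big_mkcond /=.
exact: (big_ord1_eq _ (fun j => F i j)).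
Qed.

Lemma band_sum_subdiag (F : nat -> nat -> V) :
  band_sum on_subdiag (fun i j => F i j) = \sum_(i < n.-1) F i.+1 i.
Proof.
rewrite /band_sum exchange_big /=.
exact: (band_sum_superdiag (fun i j => F j i)).
Qed.

End BandSums.

Lemma band_sumMl (V : pzRingType) n p (c : V) (F : 'I_n -> 'I_n -> V) :
  band_sum p (fun i j => c * F i j) = c * band_sum p F.
Proof.
rewrite /band_sum mulr_sumr; apply: eq_bigr => i _.
by rewrite mulr_sumr; apply: eq_bigr => j _; rewrite (fun_if (fun x => c * x)) mulr0.
Qed.

Lemma divfMnK (F : fieldType) (x : F) k : k%:R != 0 :> F -> x / k%:R *+ k = x.
Proof. by move=> k0; rewrite -mulr_natr divfK. Qed.

Section TridiagonalToeplitz.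
Variable R : realType.
Local Notation C := R[i].
Local Notation normc := (@Normc.normc R).
Implicit Types (a d b : C).

Definition tridiag_entry a d b (i j : nat) : C :=
  if i == j then d else if j == i.+1 then b else if i == j.+1 then a else 0.

Lemma tridiag_toeplitzE n a d b (i j : 'I_n) :
  tridiag_toeplitz n a d b i j = tridiag_entry a d b i j.
Proof. by rewrite mxE. Qed.

Lemma sum_tridiag_toeplitz (V : zmodType) n a d b (phi : 'I_n -> 'I_n -> C -> V) :
  (forall i j, phi i j 0 = 0) ->
  \sum_(i < n) \sum_(j < n) phi i j (tridiag_toeplitz n a d b i j) =
  band_sum on_diag (fun i j => phi i j d) + band_sum on_superdiag (fun i j => phi i j b)
  + band_sum on_subdiag (fun i j => phi i j a).
Proof.
move=> phi0; rewrite /band_sum -!big_split; apply: eq_bigr => i _.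
rewrite -!big_split; apply: eq_bigr => j _.
rewrite tridiag_toeplitzE /tridiag_entry /on_diag /on_superdiag /on_subdiag.
by do 3!case: eqP => ? //=; rewrite ?phi0 ?addr0 ?add0r //; lia.
Qed.

Lemma band_sum_diag_tridiag n a d b : band_sum on_diag (tridiag_toeplitz n a d b) = d *+ n.
Proof.
rewrite band_sum_diag (eq_bigr (fun=> d)) ?sumr_const ?card_ord // => i _.
by rewrite tridiag_toeplitzE /tridiag_entry eqxx.
Qed.

Lemma band_sum_superdiag_tridiag n a d b :
  band_sum on_superdiag (tridiag_toeplitz n a d b) = b *+ n.-1.
Proof.
rewrite (eq_band_sum _ (tridiag_toeplitzE a d b)) band_sum_superdiag.
rewrite (eq_bigr (fun=> b)) ?sumr_const ?card_ord // => i _.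
by rewrite /tridiag_entry ltn_eqF ?eqxx.
Qed.

Lemma band_sum_subdiag_tridiag n a d b :
  band_sum on_subdiag (tridiag_toeplitz n a d b) = a *+ n.-1.
Proof.
rewrite (eq_band_sum _ (tridiag_toeplitzE a d b)) band_sum_subdiag.
rewrite (eq_bigr (fun=> a)) ?sumr_const ?card_ord // => i _.
by rewrite /tridiag_entry gtn_eqF // ltn_eqF // eqxx.
Qed.

Lemma frob_inner_tridiag n a d b M :
  frob_inner (tridiag_toeplitz n a d b) M =
  d^* * band_sum on_diag M + b^* * band_sum on_superdiag M + a^* * band_sum on_subdiag M.
Proof.
rewrite /frob_inner (@sum_tridiag_toeplitz _ n a d b (fun i j x => x^* * M i j)).
  by rewrite !band_sumMl.
by move=> i j; rewrite rmorph0 mul0r.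
Qed.

Lemma frob_norm_tridiag n a d b :
  frob_norm (tridiag_toeplitz n a d b) ^+ 2 =
  normc d ^+ 2 *+ n + (normc b ^+ 2 + normc a ^+ 2) *+ n.-1.
Proof.
rewrite sqr_sqrtr; last by do 2!(apply: sumr_ge0 => ? _); rewrite sqr_ge0.
rewrite (@sum_tridiag_toeplitz _ n a d b (fun _ _ x => normc x ^+ 2)); last first.
  by move=> i j; rewrite Normc.normc0 expr0n.
rewrite band_sum_diag (band_sum_superdiag _ (fun _ _ => _)).
rewrite (band_sum_subdiag _ (fun _ _ => _)) !sumr_const !card_ord.
by rewrite mulrnDl addrA.
Qed.

Lemma orth_proj_TP n (W P : 'M[C]_n) : is_orth_proj_T W P ->
  exists a d b, [/\ P = tridiag_toeplitz n a d b, d *+ n = band_sum on_diag W,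
    b *+ n.-1 = band_sum on_superdiag W & a *+ n.-1 = band_sum on_subdiag W].
Proof.
move=> [[a [d [b defP]]] orthWP]; exists a, d, b.
have band_sum_orth a' d' b' : d'^* * band_sum on_diag (W - P) +
    b'^* * band_sum on_superdiag (W - P) + a'^* * band_sum on_subdiag (W - P) = 0.
  by rewrite -frob_inner_tridiag; apply: orthWP; exists a', d', b'.
have band_sum_proj p : band_sum p (W - P) = 0 -> band_sum p P = band_sum p W.
  by move=> /eqP; rewrite band_sum_mxB subr_eq0 eq_sym => /eqP.
rewrite -(band_sum_diag_tridiag n a d b) -(band_sum_superdiag_tridiag n a d b).
rewrite -(band_sum_subdiag_tridiag n a d b) -defP.
split=> //; apply: band_sum_proj.
- by have := band_sum_orth 0 1 0; rewrite !rmorph0 rmorph1 !mul0r !addr0 mul1r.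
- by have := band_sum_orth 0 0 1; rewrite !rmorph0 rmorph1 !mul0r add0r addr0 mul1r.
- by have := band_sum_orth 1 0 0; rewrite !rmorph0 rmorph1 !mul0r !add0r mul1r.
Qed.

Lemma orth_proj_T_exists n (W : 'M[C]_n) : (1 < n)%N -> exists P, is_orth_proj_T W P.
Proof.
move=> n_gt1.
have n0 : (n%:R : C) != 0 by rewrite pnatr_eq0 -lt0n ltnW.
have k0 : (n.-1%:R : C) != 0 by rewrite pnatr_eq0 -lt0n -ltnS prednK // ltnW.
pose a := band_sum on_subdiag W / n.-1%:R; pose d := band_sum on_diag W / n%:R.
pose b := band_sum on_superdiag W / n.-1%:R.
exists (tridiag_toeplitz n a d b); split; first by exists a, d, b.
move=> Q [a' [d' [b' ->]]]; rewrite frob_inner_tridiag !band_sum_mxB.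
rewrite band_sum_diag_tridiag band_sum_superdiag_tridiag band_sum_subdiag_tridiag.
by rewrite /a /b /d !divfMnK // !subrr !mulr0 !addr0.
Qed.

Lemma frob_norm_orth_proj_T n (W P : 'M[C]_n) : (1 < n)%N -> is_orth_proj_T W P ->
  frob_norm P ^+ 2 = normc (band_sum on_diag W) ^+ 2 / n%:R +
    (normc (band_sum on_superdiag W) ^+ 2 + normc (band_sum on_subdiag W) ^+ 2) / n.-1%:R.
Proof.
move=> n_gt1 /orth_proj_TP[a [d [b [-> dW bW aW]]]].
rewrite frob_norm_tridiag -dW -bW -aW !normcMn.
have n0 : (n%:R : R) != 0 by rewrite pnatr_eq0 -lt0n ltnW.
have k0 : (n.-1%:R : R) != 0 by rewrite pnatr_eq0 -lt0n -ltnS prednK // ltnW.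
by field; rewrite n0 k0.
Qed.

End TridiagonalToeplitz.

Lemma sum_mul_next_recurrence (R : numFieldType) (u : nat -> R) (c : R) n :
  u 0%N = 0 -> u n.+1 = 0 -> (forall k, u k.+2 + u k = 2 * c * u k.+1) ->
  \sum_(i < n.-1) u i.+1 * u i.+2 = c * \sum_(i < n) u i.+1 ^+ 2.
Proof.
move=> u0 u_end u_rec; case: n u_end => [|m] u_end; first by rewrite !big_ord0 mulr0.
apply: (@mulfI _ 2); first by rewrite pnatr_eq0.
have -> : 2 * (c * \sum_(i < m.+1) u i.+1 ^+ 2) =
    \sum_(i < m.+1) u i.+1 * u i.+2 + \sum_(i < m.+1) u i.+1 * u i.
  rewrite -big_split !mulr_sumr; apply: eq_bigr => i _ /=; rewrite -mulrDr u_rec; ring.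
rewrite big_ord_recr big_ord_recl /= u_end u0 !mulr0 addr0 add0r.
by rewrite mulr2n mulrDl mul1r; congr (_ + _); apply: eq_bigr => i _; rewrite mulrC.
Qed.

Section SineModes.
Variable R : realType.

Definition sin_mode (n h k : nat) : R := sin ((h * k)%:R * pi / n.+1%:R).

Lemma sin_natpi (m : nat) : sin (m%:R * pi) = 0 :> R.
Proof.
elim: m => [|m IHm]; first by rewrite mul0r sin0.
by rewrite -addn1 natrD mulrDl mul1r sinDpi IHm oppr0.
Qed.

Lemma sin_mode0 n h : sin_mode n h 0 = 0.
Proof. by rewrite /sin_mode muln0 !mul0r sin0. Qed.

Lemma sin_mode_last n h : sin_mode n h n.+1 = 0.
Proof.
rewrite /sin_mode natrM mulrAC mulfK ?sin_natpi //.
by rewrite pnatr_eq0.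
Qed.

Lemma sin_mode1_gt0 n h : (0 < h <= n)%N -> 0 < sin_mode n h 1.
Proof.
move=> /andP[h_gt0 h_le_n]; rewrite /sin_mode muln1; apply: sin_gt0_pi.
rewrite divr_gt0 ?mulr_gt0 ?pi_gt0 ?ltr0n //=.
by rewrite ltr_pdivrMr ?ltr0n // mulrC ltr_pM2l ?pi_gt0 // ltr_nat ltnS.
Qed.

Lemma sin_modeSS n h k :
  sin_mode n h k.+2 + sin_mode n h k = 2 * cos (h%:R * pi / n.+1%:R) * sin_mode n h k.+1.
Proof.
set al := h%:R * pi / n.+1%:R; pose x : R := (h * k.+1)%:R * pi / n.+1%:R.
have -> : sin_mode n h k.+2 = sin (x + al).
  by rewrite /sin_mode /x /al !natrM !mulrSr; congr sin; ring.
have -> : sin_mode n h k = sin (x - al).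
  by rewrite /sin_mode /x /al !natrM !mulrSr; congr sin; ring.
by rewrite sinD sinB /sin_mode -/x; ring.
Qed.

Lemma sum_sin_mode_next n h :
  \sum_(i < n.-1) sin_mode n h i.+1 * sin_mode n h i.+2 =
  cos (h%:R * pi / n.+1%:R) * \sum_(i < n) sin_mode n h i.+1 ^+ 2.
Proof.
apply: sum_mul_next_recurrence; [exact: sin_mode0 | exact: sin_mode_last | exact: sin_modeSS].
Qed.

End SineModes.

Lemma vnorm2_gt0 (R : realType) n (v : 'cV[R[i]]_n) (k : 'I_n) : v k 0 != 0 -> 0 < vnorm2 v.
Proof.
move=> vk0; rewrite sqrtr_gt0 (bigD1 k) //= ltr_pwDl ?exprn_gt0 ?normc_gt0 //.
by rewrite sumr_ge0 // => i _; rewrite sqr_ge0.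
Qed.

Section WilkinsonPerturbation.
Variables (R : realType) (n h : nat) (sigma tau : R[i]).
Hypotheses (sigma0 : sigma != 0) (tau0 : tau != 0) (h_range : (0 < h <= n)%N).
Local Notation C := R[i].
Local Notation normc := (@Normc.normc R).
Local Notation f := (sin_mode R n h).
Local Notation x := (right_evec n h sigma tau).
Local Notation y := (left_evec n h sigma tau).
Local Notation W := (wilkinson n h sigma tau).

Let z := sigma / tau.
Let s := sqrtc z.
Let t := sqrtc (z^-1)^*.
Let S := \sum_(k < n) f k.+1 ^+ 2.
Let Q := \sum_(k < n.-1) f k.+1 * f k.+2.
Let N := vnorm2 x * vnorm2 y.

Let z_neq0 : z != 0. Proof. by rewrite mulf_neq0 ?invr_eq0. Qed.

Let n_gt0 : (0 < n)%N. Proof. by case/andP: h_range => /leq_trans; apply. Qed.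

Lemma right_evecE (i : 'I_n) : x i 0 = s ^+ i.+1 * (f i.+1)%:C.
Proof. by rewrite mxE. Qed.

Lemma left_evecE (i : 'I_n) : y i 0 = t ^+ i.+1 * (f i.+1)%:C.
Proof.
by rewrite mxE (_ : tau^* / sigma^* = (z^-1)^*) // /z invf_div rmorphM /= fmorphV.
Qed.

Let t_conj_s : t * s^* = 1. Proof. exact: mul_sqrtc_conjV_conj. Qed.

Let conj_t_s : t^* * s = 1.
Proof. by rewrite -[s]conjcK -rmorphM t_conj_s rmorph1. Qed.

Lemma cdot_left_right_evec : cdot y x = S%:C.
Proof.
rewrite /cdot /S rmorph_sum; apply: eq_bigr => k _.
rewrite left_evecE right_evecE rmorphM rmorphXn /= (@conj_Creal _ (f k.+1)%:C) ?complex_real //.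
by rewrite mulrACA -exprMn conj_t_s expr1n mul1r -rmorphM expr2.
Qed.

Let w (i j : nat) : C := (N^-1)%:C * (t ^+ i.+1 * s^* ^+ j.+1) * (f i.+1 * f j.+1)%:C.

Lemma wilkinsonE (i j : 'I_n) : W i j = w i j.
Proof.
rewrite mxE big_ord1 mxE left_evecE /ctrmx mxE mxE mxE right_evecE.
rewrite !rmorphM rmorphXn /= !oppr0 !complexr0 /w /N invfM rmorphM; ring.
Qed.

Lemma band_sum_diag_wilkinson : band_sum on_diag W = (S / N)%:C.
Proof.
rewrite band_sum_diag (eq_bigr (fun i : 'I_n => (N^-1)%:C * (f i.+1 ^+ 2)%:C)) => [|i _].
  by rewrite [S / N]mulrC -mulr_sumr -rmorph_sum -rmorphM.
by rewrite wilkinsonE /w -exprMn t_conj_s expr1n mulr1 expr2.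
Qed.

Lemma band_sum_superdiag_wilkinson : band_sum on_superdiag W = s^* * (Q / N)%:C.
Proof.
rewrite (eq_band_sum _ wilkinsonE) band_sum_superdiag.
rewrite (eq_bigr (fun i : 'I_n.-1 => s^* * (N^-1)%:C * (f i.+1 * f i.+2)%:C)) => [|i _].
  by rewrite [Q / N]mulrC -mulr_sumr -rmorph_sum -mulrA -rmorphM.
rewrite /w [s^* ^+ i.+2]exprS [t ^+ _ * _]mulrCA -exprMn t_conj_s expr1n mulr1.
by rewrite [s^* * _]mulrC.
Qed.

Lemma band_sum_subdiag_wilkinson : band_sum on_subdiag W = t * (Q / N)%:C.
Proof.
rewrite (eq_band_sum _ wilkinsonE) band_sum_subdiag.
rewrite (eq_bigr (fun i : 'I_n.-1 => t * (N^-1)%:C * (f i.+1 * f i.+2)%:C)) => [|i _].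
  by rewrite [Q / N]mulrC -mulr_sumr -rmorph_sum -mulrA -rmorphM.
rewrite /w [t ^+ i.+2]exprS -[t * _ * _]mulrA -exprMn t_conj_s expr1n mulr1.
by rewrite [t * _]mulrC [f i.+2 * _]mulrC.
Qed.

Let f1_gt0 : 0 < f 1. Proof. exact: sin_mode1_gt0. Qed.

Let S_gt0 : 0 < S.
Proof.
rewrite /S (bigD1 (Ordinal n_gt0)) //= ltr_pwDl ?exprn_gt0 //.
by rewrite sumr_ge0 // => i _; rewrite sqr_ge0.
Qed.

Let N_gt0 : 0 < N.
Proof.
have f1C : (f 1)%:C != 0 by rewrite (fmorph_eq0 (real_complex R)) gt_eqF.
rewrite mulr_gt0 // (vnorm2_gt0 (k := Ordinal n_gt0)) // ?right_evecE ?left_evecE.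
  by rewrite mulf_neq0 // expf_neq0 // sqrtc_eq0.
by rewrite mulf_neq0 // expf_neq0 // sqrtc_eq0 conjc_eq0 invr_eq0.
Qed.

Lemma kappa_wilkinson : kappa n h sigma tau = N / S.
Proof. by rewrite /kappa /= cdot_left_right_evec normc_real gtr0_norm. Qed.

Lemma kappa_frob_norm_orth_proj_T (P : 'M[C]_n) : (1 < n)%N -> is_orth_proj_T W P ->
  (kappa n h sigma tau * frob_norm P) ^+ 2 = 1 / n%:R + 1 / n.-1%:R *
    (normc z + normc z^-1) * cos (h%:R * pi / n.+1%:R) ^+ 2.
Proof.
move=> n_gt1 projP; set c := cos _; set rhs := (1 / _ + _).
have ns : normc s^* ^+ 2 = normc z by rewrite normc_conj normc_sqrtc.
have nt : normc t ^+ 2 = normc z^-1 by rewrite normc_sqrtc normc_conj.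
have eQ : Q = c * S by apply: sum_sin_mode_next.
rewrite exprMn (frob_norm_orth_proj_T n_gt1 projP) kappa_wilkinson.
rewrite band_sum_diag_wilkinson band_sum_superdiag_wilkinson band_sum_subdiag_wilkinson.
rewrite !Normc.normcM !normc_real !exprMn ns nt !real_normK ?num_real // eQ /rhs.
have n0 : (n%:R : R) != 0 by rewrite pnatr_eq0 -lt0n ltnW.
have k0 : (n.-1%:R : R) != 0 by rewrite pnatr_eq0 -lt0n -ltnS prednK // ltnW.
rewrite -[vnorm2 x ^+ 2 * _]exprMn -/N.
by field; rewrite n0 k0 !gt_eqF.
Qed.

End WilkinsonPerturbation.

Theorem proposition9 (R : realType) (n h : nat) (sigma delta tau : R[i]) :
  (2 <= n)%N -> sigma * tau != 0 -> (1 <= h <= n)%N ->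
  (exists P : 'M[R[i]]_n, is_orth_proj_T (wilkinson n h sigma tau) P) /\
  (forall P : 'M[R[i]]_n, is_orth_proj_T (wilkinson n h sigma tau) P ->
     kappa n h sigma tau * frob_norm P =
     Num.sqrt (1 / n%:R + 1 / (n - 1)%:R *
        (Normc.normc (sigma / tau) + Normc.normc (tau / sigma)) *
        cos (h%:R * pi / (n.+1)%:R) ^+ 2)).
Proof.
move=> n_gt1 sigma_tau_neq0 h_range.
have [sigma0 tau0] : sigma != 0 /\ tau != 0 by apply/andP; rewrite -negb_or -mulf_eq0.
split=> [|P projP]; first exact: orth_proj_T_exists.
have kappa_ge0 : 0 <= kappa n h sigma tau.
  by rewrite divr_ge0 ?mulr_ge0 ?sqrtr_ge0 ?normc_ge0.
rewrite subn1 -[tau / sigma]invf_div.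
rewrite -(kappa_frob_norm_orth_proj_T sigma0 tau0 h_range n_gt1 projP).
by rewrite sqrtr_sqr ger0_norm // mulr_ge0 ?sqrtr_ge0.
Qed.
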